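(* Let $\chi:\mathrm{SO}_n\to\mathfrak{so}_n$ be smooth with $\chi(gAg^T)=g\chi(A)g^T$ for all $A,g\in\mathrm{SO}_n$. Then: (i) there exists a $2\pi$-periodic $\tau=(\tau_k)_{k=1}^p:\mathcal T\to\mathbb R^p$ with $\chi(A_\Theta)=\sum_{k=1}^p\tau_k(\Theta)F_{2k-1\,2k}$ for all $\Theta\in\mathcal T$, and $\tau\circ W=W\circ\tau$ for all $W\in\mathfrak W$; (ii) for every $A\in\mathrm{SO}_n$ and every $(g,\Theta)\in\mathrm{SO}_n\times\mathcal T$ with $A=gA_\Theta g^T$, $\chi(A)=\sum_{k=1}^p\tau_k(\Theta)\,gF_{2k-1\,2k}g^T$.
   Context: Let $n\ge3$, $\mathrm{SO}_n$ the rotation group, $\mathfrak{so}_n$ the skew-symmetric matrices; $F_{ij}\in\mathfrak{so}_n$ has entries $(F_{ij})_{k\ell}=\delta_{ik}\delta_{j\ell}-\delta_{i\ell}\delta_{jk}$. $p=\lfloor n/2\rfloor$; $\mathcal T=[-\pi,\pi)^p$ viewed as the torus. $R_\theta=\begin{pmatrix}\cos\theta&-\sin\theta\\\sin\theta&\cos\theta\end{pmatrix}$; for $\Theta=(\theta_1,\dots,\theta_p)$, $A_\Theta$ is block diagonal with blocks $R_{\theta_1},\dots,R_{\theta_p}$ (and a final entry $1$ if $n=2p+1$). The Weyl group $\mathfrak W$ acts linearly on $\mathbb R^p$: for $n=2p$ it is generated by coordinate transpositions $\theta_i\leftrightarrow\theta_j$ and sign changes of pairs $(\theta_i,\theta_j)\mapsto(-\theta_i,-\theta_j)$,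 $i<j$; for $n=2p+1$ by coordinate transpositions and single sign changes $\theta_i\mapsto-\theta_i$. *)

From HB Require Import structures.
From mathcomp Require Import all_boot all_order all_algebra.
From mathcomp Require Import all_classical all_reals all_analysis.
Set Implicit Arguments. Unset Strict Implicit. Unset Printing Implicit Defensive.
Import Order.TTheory GRing.Theory Num.Theory.
Import numFieldNormedType.Exports.
Local Open Scope classical_set_scope.
Local Open Scope ring_scope.

Section Defs.
Variable R : realType.

Definition SO (n : nat) : set 'M[R]_n :=
  [set A | A *m A^T = 1%:M /\ \det A = 1].

Definition so (n : nat) : set 'M[R]_n := [set A | A^T = - A].

(* F_{ij} with 0-based nat indices: (F i j) a b = [i=a][j=b] - [i=b][j=a] *)
Definition Fmx (n i j : nat) : 'M[R]_n :=
  \matrix_(a < n, b < n)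
    ((((i == a) && (j == b)) : nat)%:R - (((i == b) && (j == a)) : nat)%:R).

Definition coord_at (p : nat) (Th : 'rV[R]_p) (k : nat) : R :=
  if insub k is Some j then Th ord0 j else 0.

(* entry (r,c) of the rotation block R_theta, r,c in {0,1} given by parity *)
Definition rot_entry (t : R) (r c : bool) : R :=
  match r, c with
  | false, false => cos t
  | false, true => - sin t
  | true, false => sin t
  | true, true => cos t
  end.

(* A_Theta : block diagonal with blocks R_{theta_1},...,R_{theta_p}
   (and a final 1 if n = 2p+1); 0-based indices, block k occupies 2k, 2k+1 *)
Definition A_Theta (n : nat) (Th : 'rV[R]_(n./2)) : 'M[R]_n :=
  \matrix_(a < n, b < n)
    if (a./2 == b./2) && (a./2 < n./2)%N
    then rot_entry (coord_at Th a./2) (odd a) (odd b)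
    else ((a == b :> nat) : nat)%:R.

Definition torus (p : nat) : set 'rV[R]_p :=
  [set Th | forall k : 'I_p, - pi <= Th ord0 k < pi].

Definition transp (p : nat) (i j : 'I_p) (v : 'rV[R]_p) : 'rV[R]_p :=
  \row_l (if l == i then v ord0 j else if l == j then v ord0 i else v ord0 l).
Definition sign2 (p : nat) (i j : 'I_p) (v : 'rV[R]_p) : 'rV[R]_p :=
  \row_l (if (l == i) || (l == j) then - v ord0 l else v ord0 l).
Definition sign1 (p : nat) (i : 'I_p) (v : 'rV[R]_p) : 'rV[R]_p :=
  \row_l (if l == i then - v ord0 l else v ord0 l).

Inductive weyl_gen (n : nat) : ('rV[R]_(n./2) -> 'rV[R]_(n./2)) -> Prop :=
  | wg_transp (i j : 'I_(n./2)) : @weyl_gen n (transp i j)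
  | wg_sign2 (i j : 'I_(n./2)) : (i < j)%N -> ~~ odd n -> @weyl_gen n (sign2 i j)
  | wg_sign1 (i : 'I_(n./2)) : odd n -> @weyl_gen n (sign1 i).

(* the Weyl group: the group generated by the generators (all generators are
   involutions, so the generated monoid is the generated group) *)
Inductive weyl (n : nat) : ('rV[R]_(n./2) -> 'rV[R]_(n./2)) -> Prop :=
  | weyl_id : @weyl n id
  | weyl_comp g W : @weyl_gen n g -> @weyl n W -> @weyl n (g \o W).

Fixpoint Ck_on (k : nat) (m : nat) (U : set 'M[R]_m) (f : 'M[R]_m -> 'M[R]_m)
  : Prop :=
  match k with
  | 0 => {within U, continuous f}
  | k'.+1 => (forall x v, U x -> derivable f x v) /\
             (forall v, Ck_on k' U (fun x => 'D_v f x))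
  end.

Definition smooth_on (m : nat) (U : set 'M[R]_m) (f : 'M[R]_m -> 'M[R]_m) :=
  forall k, Ck_on k U f.

Definition smooth_SO (n : nat) (chi : 'M[R]_n -> 'M[R]_n) : Prop :=
  exists (U : set 'M[R]_n) (f : 'M[R]_n -> 'M[R]_n),
    [/\ open U, @SO n `<=` U, smooth_on U f & forall A, @SO n A -> f A = chi A].

End Defs.

From HB Require Import structures.
From mathcomp Require Import all_boot all_order all_algebra all_fingroup.
From mathcomp Require Import all_classical all_reals all_analysis.
From mathcomp Require Import zify ring lra.
Set Implicit Arguments.
Unset Strict Implicit.
Unset Printing Implicit Defensive.
Import Order.TTheory GRing.Theory Num.Theory.
Import numFieldNormedType.Exports.
Local Open Scope classical_set_scope.
Local Open Scope ring_scope.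

(* Conjugation by signed permutation matrices maps the torus to itself: negating the second
   coordinate of block [k] negates [theta_k], and swapping two blocks swaps their angles, so
   equivariance transports [chi] along the Weyl generators.  Negating both coordinates of one
   block fixes [A_Theta], which forces [chi (A_Theta)] to vanish off the diagonal 2x2 blocks;
   being skew, it is then [\sum_k tau_k F_(2k,2k+1)] with [tau_k] its [(2k, 2k+1)] entry.
   Periodicity of [tau] is that of [A_Theta], and (ii) is equivariance once more. *)

Lemma inj_tperm (T U : finType) (f : T -> U) (x y z : T) : injective f ->
  tperm (f x) (f y) (f z) = f (tperm x y z).
Proof.
move=> f_inj; case: (tpermP x y z) => [->|->|zx zy]; rewrite ?tpermL ?tpermR //.
by rewrite tpermD // (inj_eq f_inj) eq_sym; apply/eqP.
Qed.

Lemma conj_diag_mxE (R : comPzRingType) (n : nat) (d : 'rV[R]_n) (M : 'M[R]_n) a b :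
  (diag_mx d *m M *m (diag_mx d)^T) a b = d 0 a * M a b * d 0 b.
Proof. by rewrite tr_diag_mx mul_mx_diag mxE mul_diag_mx mxE. Qed.

Lemma skew_mxE (R : zmodType) (n : nat) (M : 'M[R]_n) a b : M^T = - M -> M a b = - M b a.
Proof. by move/(congr1 (fun N : 'M[R]_n => N b a)); rewrite !mxE. Qed.

Lemma conj_perm_mxE (R : pzRingType) (n : nat) (s : 'S_n) (M : 'M[R]_n) a b :
  (perm_mx s *m M *m (perm_mx s)^T) a b = M (s a) (s b).
Proof. by rewrite tr_perm_mx -mulmxA -col_permE -row_permE !mxE. Qed.

Lemma rot_add (R : realType) (x y : R) r c : rot_entry (x + y) r c =
  rot_entry x r false * rot_entry y false c + rot_entry x r true * rot_entry y true c.
Proof. by case: r; case: c; rewrite /= ?cosD ?sinD; ring. Qed.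

Lemma rot_opp (R : realType) (x : R) r c : rot_entry (- x) r c = rot_entry x c r.
Proof. by case: r; case: c; rewrite /= ?cosN ?sinN ?opprK. Qed.

Section Blocks.
Variable n : nat.
Local Notation p := n./2.

Fact blk_subproof (k : 'I_p) (e : bool) : (e + k.*2 < n)%N.
Proof. by rewrite -[X in (_ < X)%N]odd_double_half; case: e (odd n) (ltn_ord k); lia. Qed.

Definition blk (k : 'I_p) (e : bool) : 'I_n := Ordinal (blk_subproof k e).

Lemma blk_half k e : (blk k e)./2 = k.
Proof. exact: half_bit_double. Qed.

Lemma blk_odd k e : odd (blk k e) = e.
Proof. by case: e; rewrite /= ?odd_double. Qed.

Lemma eq_blk k e l f : (blk k e == blk l f) = (k == l) && (e == f).
Proof.
apply/eqP/andP => [h|[/eqP-> /eqP->]] //.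
have := congr1 (fun a : 'I_n => (a./2, odd a)) h.
by rewrite /= !blk_half !blk_odd => -[/val_inj-> ->].
Qed.

Lemma blk_inj e : injective (blk^~ e).
Proof. by move=> k l /eqP; rewrite eq_blk eqxx andbT => /eqP. Qed.

Variant blk_spec : 'I_n -> Type :=
  | BlkIn k e : blk_spec (blk k e)
  | BlkOut (a : 'I_n) of (p <= a./2)%N : blk_spec a.

Lemma blkP a : blk_spec a.
Proof.
have [ha|ha] := ltnP a./2 p; last exact: BlkOut.
have -> : a = blk (Ordinal ha) (odd a) by apply/val_inj; rewrite /= odd_double_half.
exact: BlkIn.
Qed.

(* The index outside all blocks is [n - 1], for odd [n], where [A_Theta] has its trailing [1]. *)
Lemma blk_out_eq (a b : 'I_n) : (p <= a./2)%N -> (p <= b./2)%N -> a = b.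
Proof.
move=> ha hb; apply: val_inj => /=.
move: (odd_double_half a) (odd_double_half b) (odd_double_half n) (ltn_ord a) (ltn_ord b).
by move: ha hb; case: (odd a) (odd b) (odd n); lia.
Qed.

Lemma odd_blk_out : odd n -> exists a : 'I_n, (p <= a./2)%N.
Proof.
case: n => // m /= om; exists ord_max => /=.
by move: (odd_double_half m) (odd_double_half m.+1) => /=; case: (odd m) om; lia.
Qed.

Lemma out_half_neq (k : 'I_p) (a : 'I_n) : (p <= a./2)%N -> a./2 != k.
Proof. by move=> ha; rewrite neq_ltn (leq_trans (ltn_ord k) ha) orbT. Qed.

Lemma blk_neq_out k e (a : 'I_n) : (p <= a./2)%N -> (blk k e == a) = false.
Proof. by move/(out_half_neq k); apply: contraNF => /eqP<-; rewrite blk_half. Qed.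

End Blocks.

Arguments blk {n} k e.

Section Torus.
Variables (R : realType) (n : nat).
Local Notation p := n./2.
Local Notation A := (@A_Theta R n).

Lemma coord_at_ord (T : 'rV[R]_p) (k : 'I_p) : coord_at T k = T 0 k.
Proof. by rewrite /coord_at valK. Qed.

Lemma A_Theta_blk T (k l : 'I_p) e f :
  A T (blk k e) (blk l f) = if k == l then rot_entry (T 0 k) e f else 0.
Proof.
rewrite mxE !blk_half !blk_odd ltn_ord andbT !(inj_eq val_inj).
by case: eqP => [->|/eqP kl]; rewrite ?coord_at_ord // eq_blk (negbTE kl).
Qed.

Lemma A_Theta_out_l T (a b : 'I_n) : (p <= a./2)%N -> A T a b = (a == b)%:R.
Proof. by move=> ha; rewrite mxE ltnNge ha andbF (inj_eq val_inj). Qed.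

Lemma A_Theta_out_r T (a b : 'I_n) : (p <= b./2)%N -> A T a b = (a == b)%:R.
Proof.
move=> hb; rewrite mxE (inj_eq val_inj); case: ifP => // /andP[/eqP-> hb'].
by move: hb; rewrite leqNgt hb'.
Qed.

Lemma A_ThetaD T U : A T *m A U = A (T + U).
Proof.
apply/matrixP => a c; rewrite mxE; case: (blkP a) => [k e|{}a ha]; last first.
  rewrite (bigD1 a) //= big1 => [|b ba]; last first.
    by rewrite A_Theta_out_l // eq_sym (negbTE ba) mul0r.
  by rewrite !A_Theta_out_l // eqxx mul1r addr0.
rewrite (bigD1 (blk k false)) // (bigD1 (blk k true)) ?eq_blk ?andbF //= big1.
  rewrite addr0; case: (blkP c) => [l f|{}c hc]; last first.
    by rewrite !(A_Theta_out_r U) // (A_Theta_out_r (T + U)) // !blk_neq_out // !mulr0 addr0.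
  rewrite !A_Theta_blk eqxx; case: eqP => _; last by rewrite !mulr0 addr0.
  by rewrite mxE rot_add.
move=> b /andP[bk0 bk1]; case: (blkP b) bk0 bk1 => [l f|{}b hb _ _]; last first.
  by rewrite A_Theta_out_r // blk_neq_out //= mulr0n mul0r.
rewrite A_Theta_blk; case: (eqVneq k l) => [<-|_ _ _]; last by rewrite mul0r.
by case: f; rewrite eqxx.
Qed.

Lemma trmx_A_Theta T : (A T)^T = A (- T).
Proof.
apply/matrixP => a b; rewrite mxE.
case: (blkP a) => [k e|{}a ha]; last by rewrite A_Theta_out_r // A_Theta_out_l // eq_sym.
case: (blkP b) => [l f|{}b hb]; last by rewrite A_Theta_out_l // A_Theta_out_r // eq_sym.
by rewrite !A_Theta_blk eq_sym; case: eqP => // ->; rewrite mxE rot_opp.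
Qed.

Lemma A_Theta_eq1 (T : 'rV[R]_p) :
  (forall k, cos (T 0 k) = 1 /\ sin (T 0 k) = 0) -> A T = 1%:M.
Proof.
move=> hT; apply/matrixP => a b; rewrite [RHS]mxE.
case: (blkP a) => [k e|{}a ha]; last by rewrite A_Theta_out_l.
case: (blkP b) => [l f|{}b hb]; last by rewrite A_Theta_out_r.
rewrite A_Theta_blk eq_blk; case: eqP => // _; have [hc hs] := hT k.
by case: e; case: f; rewrite /= ?hc ?hs ?oppr0.
Qed.

Lemma A_Theta0 : A 0 = 1%:M.
Proof. by apply: A_Theta_eq1 => k; rewrite mxE cos0 sin0. Qed.

Lemma A_Theta_periodic (T : 'rV[R]_p) (k : 'I_p) : A (T + (2 * pi) *: delta_mx 0 k) = A T.
Proof.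
rewrite -A_ThetaD [A (_ *: _)]A_Theta_eq1 ?mulmx1 // => l.
rewrite !mxE eqxx /=; case: (l == k); rewrite /= ?mulr1 ?mulr0 ?cos0 ?sin0 //.
by rewrite mulr_natl cos2pi sin2pi.
Qed.

Lemma A_Theta_SO T : SO (A T).
Proof.
have orth U : A U *m (A U)^T = 1%:M by rewrite trmx_A_Theta A_ThetaD subrr A_Theta0.
split; first exact: orth.
have det_sq U : \det (A U) ^+ 2 = 1 by rewrite expr2 -{2}det_tr -det_mulmx orth det1.
(* [A T] is a square, [A (T/2) *m A (T/2)], so its determinant is a nonnegative square root of 1. *)
have -> : T = 2^-1 *: T + 2^-1 *: T by rewrite -scalerDl -[2^-1]mul1r -splitr scale1r.
rewrite -A_ThetaD det_mulmx; have := det_sq (2^-1 *: T).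
move: (\det _) => x; rewrite expr2 => x2; have := sqr_ge0 x; rewrite expr2; nra.
Qed.

End Torus.

Section Symmetries.
Variables (R : realType) (n : nat).
Local Notation p := n./2.
Local Notation A := (@A_Theta R n).

Definition flip_coords (F : pred 'I_p) (T : 'rV[R]_p) : 'rV[R]_p :=
  \row_l (if F l then - T 0 l else T 0 l).

Lemma sign2E (i j : 'I_p) T : sign2 i j T = flip_coords (pred2 i j) T.
Proof. by apply/rowP => l; rewrite !mxE. Qed.

Lemma sign1E (i : 'I_p) T : sign1 i T = flip_coords (pred1 i) T.
Proof. by apply/rowP => l; rewrite !mxE. Qed.

Lemma transpE (i j : 'I_p) (T : 'rV[R]_p) : transp i j T = \row_l T 0 (tperm i j l).
Proof.
apply/rowP => l; rewrite !mxE.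
by case: tpermP => [->|->|/eqP/negbTE-> /eqP/negbTE->]; rewrite ?eqxx //; case: eqP => [->|].
Qed.

Definition sign_flip2 (x y : 'I_n) : 'rV[R]_n := \row_a (if (a == x) || (a == y) then -1 else 1).

Lemma sign_flip2_sq x y a : sign_flip2 x y 0 a ^+ 2 = 1.
Proof. by rewrite mxE; case: ifP; rewrite ?sqrrN expr1n. Qed.

Lemma sign_flip2_SO x y : x != y -> SO (diag_mx (sign_flip2 x y)).
Proof.
move=> xy; split; last first.
  rewrite det_diag (bigD1 x) // (bigD1 y) 1?eq_sym //= big1 => [|a /andP[ax ay]].
    by rewrite !mxE !eqxx orbT mulr1 mulrNN mulr1.
  by rewrite mxE (negbTE ax) (negbTE ay).
apply/matrixP => a b; rewrite tr_diag_mx mul_mx_diag !mxE.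
case: (eqVneq a b) => [<-|_]; last by rewrite mulr0n mul0r.
by rewrite /= mulr1n -expr2; have := sign_flip2_sq x y a; rewrite mxE => ->.
Qed.

Lemma sign_flip2_blkE (k : 'I_p) (a : 'I_n) :
  sign_flip2 (blk k false) (blk k true) 0 a = if a./2 == k then -1 else 1.
Proof.
rewrite mxE; case: (blkP a) => [l f|{}a ha]; last first.
  by rewrite !(eq_sym a) !blk_neq_out // ifF //; apply/negbTE/out_half_neq.
by rewrite !eq_blk blk_half (inj_eq val_inj); case: f; rewrite ?andbT ?andbF ?orbF.
Qed.

Lemma conj_sign_A_Theta (d : 'rV[R]_n) (F : pred 'I_p) T :
  (forall a, d 0 a ^+ 2 = 1) ->
  (forall k, d 0 (blk k false) * d 0 (blk k true) = if F k then -1 else 1) ->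
  diag_mx d *m A T *m (diag_mx d)^T = A (flip_coords F T).
Proof.
move=> d_sq d_blk; apply/matrixP => a b; rewrite conj_diag_mxE.
case: (blkP a) => [k e|{}a ha]; last first.
  rewrite !A_Theta_out_l //; case: eqVneq => [->|_]; last by rewrite mulr0 mul0r.
  by rewrite mulr1 -expr2 d_sq.
case: (blkP b) => [l f|{}b hb]; last by rewrite !A_Theta_out_r // blk_neq_out // mulr0 mul0r.
rewrite !A_Theta_blk; case: eqVneq => [<-|_]; last by rewrite mulr0 mul0r.
rewrite mxE mulrAC; have xy := d_blk k.
case: e; case: f => /=; rewrite ?[d 0 (blk k true) * _]mulrC -?expr2 ?d_sq ?xy ?mul1r //;
  by case: (F k); rewrite ?cosN ?sinN ?mulN1r ?mul1r ?opprK.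
Qed.

Definition blk_swap (i j : 'I_p) : 'S_n :=
  (tperm (blk i false) (blk j false) * tperm (blk i true) (blk j true))%g.

Lemma blk_swap_blk i j k e : blk_swap i j (blk k e) = blk (tperm i j k) e.
Proof.
have fixed e' (u : 'I_p) : tperm (blk i e') (blk j e') (blk u (~~ e')) = blk u (~~ e').
  by rewrite tpermD // eq_blk; case: e'; rewrite andbF.
rewrite permM; case: e.
  by rewrite (fixed false) (inj_tperm _ _ _ (@blk_inj _ true)).
by rewrite (inj_tperm _ _ _ (@blk_inj _ false)) (fixed true).
Qed.

Lemma blk_swap_out i j (a : 'I_n) : (p <= a./2)%N -> blk_swap i j a = a.
Proof. by move=> ha; rewrite permM !tpermD // blk_neq_out. Qed.

Lemma blk_swap_SO i j : SO (perm_mx (blk_swap i j) : 'M[R]_n).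
Proof.
split; first by rewrite tr_perm_mx -perm_mxM mulgV perm_mx1.
by rewrite det_perm odd_permM !odd_tperm !eq_blk !andbT addbb expr0.
Qed.

Lemma conj_blk_swap_A_Theta i j T :
  perm_mx (blk_swap i j) *m A T *m (perm_mx (blk_swap i j))^T = A (transp i j T).
Proof.
apply/matrixP => a b; rewrite conj_perm_mxE.
case: (blkP a) => [k e|{}a ha]; last first.
  by rewrite (blk_swap_out i j ha) !A_Theta_out_l // -{1}(blk_swap_out i j ha) (inj_eq perm_inj).
case: (blkP b) => [l f|{}b hb]; last first.
  by rewrite (blk_swap_out i j hb) !A_Theta_out_r // -{1}(blk_swap_out i j hb) (inj_eq perm_inj).
by rewrite !blk_swap_blk !A_Theta_blk (inj_eq perm_inj) transpE mxE.
Qed.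

End Symmetries.

Arguments sign_flip2 {R n} x y.
Arguments blk_swap_SO {R n} i j.

Section Fmx.
Variables (R : realType) (n : nat).
Local Notation p := n./2.

Lemma Fmx_blkE (m : 'I_p) (a b : 'I_n) : Fmx R n (2 * m) (2 * m).+1 a b =
  ((a == blk m false) && (b == blk m true))%:R - ((b == blk m false) && (a == blk m true))%:R.
Proof.
rewrite /Fmx mxE -!(inj_eq val_inj) /= mul2n add0n add1n.
by rewrite ![_.*2 == _]eq_sym ![_.*2.+1 == _]eq_sym.
Qed.

Lemma Fmx_off (m : 'I_p) (a b : 'I_n) : a./2 != m -> Fmx R n (2 * m) (2 * m).+1 a b = 0.
Proof.
move=> am; have ne e : (a == blk m e) = false.
  by apply/negbTE; apply: contra am => /eqP->; rewrite blk_half.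
by rewrite Fmx_blkE !ne andbF subrr.
Qed.

Lemma skew_blockdiag_FmxE (M : 'M[R]_n) : M^T = - M ->
  (forall a b : 'I_n, a./2 != b./2 -> M a b = 0) ->
  M = \sum_(k < p) M (blk k false) (blk k true) *: Fmx R n (2 * k) (2 * k).+1.
Proof.
move=> skew off; have skewE a b := skew_mxE a b skew.
have diag0 a : M a a = 0 by have := skewE a a; lra.
apply/matrixP => a b; rewrite summxE.
case: (blkP a) => [k e|{}a ha]; last first.
  rewrite big1 => [|m _]; last first.
    by rewrite mxE Fmx_off ?mulr0 // out_half_neq.
  case: (blkP b) => [l f|{}b hb]; last by rewrite (blk_out_eq ha hb) diag0.
  by rewrite off // blk_half out_half_neq.
rewrite (bigD1 k) //= big1 => [|m mk]; last by rewrite mxE Fmx_off ?mulr0 // blk_half eq_sym.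
rewrite addr0 mxE Fmx_blkE.
case: (blkP b) => [l f|{}b hb]; last first.
  have bk x : (b == blk k x) = false by rewrite eq_sym blk_neq_out.
  by rewrite off ?bk ?andbF ?subrr ?mulr0 // blk_half eq_sym out_half_neq.
have [<-|lk] := eqVneq l k; last first.
  rewrite off; last by rewrite !blk_half (inj_eq val_inj) eq_sym.
  by rewrite !eq_blk (negbTE lk) /= andbF subrr mulr0.
rewrite !eq_blk !eqxx /=.
by case: e; case: f; rewrite /= ?diag0 ?subr0 ?mulr1 ?sub0r ?mulrN1 -?skewE ?subrr ?mulr0.
Qed.

End Fmx.

Section Equivariant.
Variables (R : realType) (n : nat) (chi : 'M[R]_n -> 'M[R]_n).
Hypothesis chi_so : forall A, SO A -> so (chi A).
Hypothesis chi_equiv : forall A g, SO A -> SO g -> chi (g *m A *m g^T) = g *m chi A *m g^T.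
Local Notation p := n./2.
Local Notation A := (@A_Theta R n).

Definition tau (T : 'rV[R]_p) : 'rV[R]_p := \row_k chi (A T) (blk k false) (blk k true).

Lemma chi_A_Theta_conj g T U : SO g -> g *m A T *m g^T = A U ->
  chi (A U) = g *m chi (A T) *m g^T.
Proof. by move=> gSO <-; rewrite chi_equiv //; apply: A_Theta_SO. Qed.

Lemma chi_A_Theta_offblock T (a b : 'I_n) : a./2 != b./2 -> chi (A T) a b = 0.
Proof.
have skewE c d := skew_mxE c d (chi_so (A_Theta_SO T)).
(* Flipping both signs of block [k] fixes [A T], but negates the entries linking block [k] to the rest. *)
have cross (k : 'I_p) e (c : 'I_n) : c./2 != k -> chi (A T) (blk k e) c = 0.
  move=> ck; pose d : 'rV[R]_n := sign_flip2 (blk k false) (blk k true).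
  have fixA : diag_mx d *m A T *m (diag_mx d)^T = A T.
    rewrite (@conj_sign_A_Theta _ _ d pred0) => [||l]; last 2 first.
    - exact: sign_flip2_sq.
    - by rewrite !sign_flip2_blkE !blk_half; case: (_ == _); rewrite ?mulrNN mulr1.
    by congr (A _); apply/rowP => l; rewrite mxE.
  have dSO : SO (diag_mx d) by apply: sign_flip2_SO; rewrite eq_blk andbF.
  have := congr1 (fun N : 'M[R]_n => N (blk k e) c) (chi_A_Theta_conj dSO fixA).
  by rewrite conj_diag_mxE !sign_flip2_blkE blk_half eqxx (negbTE ck) mulN1r mulr1; lra.
move=> ab; case: (blkP a) ab => [k e|{}a ha].
  by rewrite blk_half eq_sym; apply: cross.
case: (blkP b) => [l f|{}b hb] ab; first by rewrite skewE cross ?oppr0 // -(blk_half l f).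
by rewrite (blk_out_eq ha hb) eqxx in ab.
Qed.

Lemma chi_A_Theta_sum T : chi (A T) = \sum_(k < p) tau T 0 k *: Fmx R n (2 * k) (2 * k).+1.
Proof.
rewrite {1}(skew_blockdiag_FmxE (chi_so (A_Theta_SO T)) (@chi_A_Theta_offblock T)).
by apply: eq_bigr => k _; rewrite mxE.
Qed.

Lemma tau_periodic T (k : 'I_p) : tau (T + (2 * pi) *: delta_mx 0 k) = tau T.
Proof. by rewrite /tau A_Theta_periodic. Qed.

Lemma tau_transp (i j : 'I_p) T : tau (transp i j T) = transp i j (tau T).
Proof.
apply/rowP => l; rewrite [LHS]mxE (chi_A_Theta_conj (blk_swap_SO i j) (conj_blk_swap_A_Theta i j T)).
by rewrite conj_perm_mxE !blk_swap_blk transpE !mxE.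
Qed.

Lemma tau_flip_coords (F : pred 'I_p) (d : 'rV[R]_n) T :
  SO (diag_mx d) -> (forall a, d 0 a ^+ 2 = 1) ->
  (forall k, d 0 (blk k false) = 1) -> (forall k, d 0 (blk k true) = if F k then -1 else 1) ->
  tau (flip_coords F T) = flip_coords F (tau T).
Proof.
move=> dSO d_sq d0 d1; have d01 k : d 0 (blk k false) * d 0 (blk k true) = if F k then -1 else 1.
  by rewrite d0 d1 mul1r.
apply/rowP => l; rewrite !mxE (chi_A_Theta_conj dSO (conj_sign_A_Theta T d_sq d01)).
by rewrite conj_diag_mxE d0 d1 mul1r; case: (F l); rewrite ?mulrN1 ?mulr1.
Qed.

Lemma tau_sign2 (i j : 'I_p) T : i != j -> tau (sign2 i j T) = sign2 i j (tau T).
Proof.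
move=> ij; rewrite !sign2E.
apply: (@tau_flip_coords _ (sign_flip2 (blk i true) (blk j true))) => [||k|k].
- by apply: sign_flip2_SO; rewrite eq_blk (negbTE ij).
- exact: sign_flip2_sq.
- by rewrite mxE !eq_blk !andbF.
- by rewrite mxE !eq_blk !andbT.
Qed.

Lemma tau_sign1 (i : 'I_p) T : odd n -> tau (sign1 i T) = sign1 i (tau T).
Proof.
move=> /odd_blk_out[a ha]; rewrite !sign1E.
apply: (@tau_flip_coords _ (sign_flip2 (blk i true) a)) => [||k|k].
- by apply: sign_flip2_SO; rewrite blk_neq_out.
- exact: sign_flip2_sq.
- by rewrite mxE eq_blk blk_neq_out // andbF.
- by rewrite mxE eq_blk blk_neq_out // andbT orbF.
Qed.

Lemma tau_weyl W : weyl W -> tau \o W = W \o tau.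
Proof.
elim=> [|g W' gen _ IH] //; apply: boolp.funext => T /=.
rewrite -[W' (tau T)]/((W' \o tau) T) -IH /=.
case: gen => [i j|i j ij _|i on].
- exact: tau_transp.
- by apply: tau_sign2; rewrite -(inj_eq val_inj) neq_ltn ij.
- exact: tau_sign1.
Qed.

End Equivariant.

Theorem proposition6p2 (R : realType) (n : nat) (hn : (3 <= n)%N)
  (chi : 'M[R]_n -> 'M[R]_n)
  (chi_so : forall A, @SO R n A -> @so R n (chi A))
  (chi_smooth : smooth_SO chi)
  (chi_equiv : forall A g, @SO R n A -> @SO R n g ->
      chi (g *m A *m g^T) = g *m chi A *m g^T) :
  exists tau : 'rV[R]_(n./2) -> 'rV[R]_(n./2),
    [/\ (forall (Th : 'rV[R]_(n./2)) (k : 'I_(n./2)),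
           tau (Th + (2 * pi) *: delta_mx ord0 k) = tau Th),
        (forall Th, @torus R (n./2) Th ->
           chi (@A_Theta R n Th) = \sum_(k < n./2) tau Th ord0 k *: Fmx R n (2 * k) (2 * k).+1),
        (forall W, @weyl R n W -> tau \o W = W \o tau) &
        (forall A g Th, @SO R n A -> @SO R n g -> @torus R (n./2) Th ->
           A = g *m @A_Theta R n Th *m g^T ->
           chi A = \sum_(k < n./2) tau Th ord0 k *: (g *m Fmx R n (2 * k) (2 * k).+1 *m g^T))].
Proof.
exists (tau chi); split.
- exact: tau_periodic.
- by move=> Th _; exact: chi_A_Theta_sum.
- exact: tau_weyl.
move=> _ g Th _ gSO _ ->; rewrite chi_equiv //; last exact: A_Theta_SO.
rewrite chi_A_Theta_sum //.
rewrite mulmx_sumr mulmx_suml; apply: eq_bigr => k _.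
by rewrite -scalemxAr -scalemxAl.
Qed.
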